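(* Let $X_1,X_2,B_1,B_2$ be topological spaces with continuous maps $f\colon X_1\to X_2$, $r_1\colon X_1\to B_1$, $r_2\colon X_2\to B_2$, $f_0\colon B_1\to B_2$ such that $r_2\circ f=f_0\circ r_1$, where $B_1,B_2$ are locally compact Hausdorff and $f_0$ is proper. Let $\tilde f\colon\beta_{B_1}X_1\to\beta_{B_2}X_2$ be the unique continuous map with $\tilde f\circ i_1=i_2\circ f$ and $\beta_{B_2}r_2\circ\tilde f=f_0\circ\beta_{B_1}r_1$. If $f$ is a homeomorphism, then so is $\tilde f$.
   Context: For a locally compact Hausdorff space $B$ and a space $X$ with continuous $r\colon X\to B$, let $H_X\subseteq\mathrm{C_b}(X)$ be the closed linear span of products $u\cdot(v\circ r)$, $u\in\mathrm{C_b}(X)$, $v\in\mathrm C_0(B)$. The relative Stone--Čech compactification $\beta_BX$ is the spectrum of the commutative C*-algebra $H_X$; $i\colon X\to\beta_BX$ sends $x$ to evaluation at $x$; $\beta_Br\colon\beta_BX\to B$ is the unique continuous map with $\beta_Br\circ i=r$. The map $\tilde f$ exists and is unique; $i_j$ denotes the canonical map for $(X_j,r_j)$. *)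

From HB Require Import structures.
From mathcomp Require Import all_boot all_order all_algebra.
From mathcomp Require Import all_classical all_reals all_analysis.
From mathcomp Require Import complex.
Set Implicit Arguments. Unset Strict Implicit. Unset Printing Implicit Defensive.
Import Order.TTheory GRing.Theory Num.Theory.
Local Open Scope classical_set_scope.
Local Open Scope ring_scope.
Import numFieldTopology.Exports.

Definition Cplx (R : realType) : numClosedFieldType := R[i].

Definition Cb (R : realType) (X : topologicalType) : set (X -> Cplx R) :=
  [set u : X -> Cplx R | continuous u /\ exists M : Cplx R, forall x, `|u x| <= M].

Definition C0 (R : realType) (B : topologicalType) : set (B -> Cplx R) :=
  [set v : B -> Cplx R | continuous v /\
     forall e : Cplx R, 0 < e -> exists K : set B, compact K /\
       forall b, ~ K b -> `|v b| < e].

(* Finite linear combinations of products u * (v o r); scalars are absorbed into u. *)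
Definition Hgen (R : realType) (X B : topologicalType) (r : X -> B) : set (X -> Cplx R) :=
  [set g : X -> Cplx R | exists (n : nat) (u : 'I_n -> X -> Cplx R) (v : 'I_n -> B -> Cplx R),
     (forall k, @Cb R X (u k) /\ @C0 R B (v k)) /\
     g = (fun x => \sum_(k < n) u k x * v k (r x))].

Definition HX (R : realType) (X B : topologicalType) (r : X -> B) : set (X -> Cplx R) :=
  [set h : X -> Cplx R | @Cb R X h /\
     forall e : Cplx R, 0 < e -> exists g, @Hgen R _ _ r g /\ forall x, `|h x - g x| <= e].

(* Characters of the commutative C*-algebra H_X: nonzero multiplicative linear
   functionals on H_X; normalized to be 0 outside H_X so that they are
   determined by their restriction to H_X. *)
Definition is_character (R : realType) (X B : topologicalType) (r : X -> B)
    (phi : (X -> Cplx R) -> Cplx R) : Prop :=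
  [/\ forall (a : Cplx R) f g, @HX R _ _ r f -> @HX R _ _ r g ->
        phi (fun x => a * f x + g x) = a * phi f + phi g,
      forall f g, @HX R _ _ r f -> @HX R _ _ r g -> phi (fun x => f x * g x) = phi f * phi g,
      exists f, @HX R _ _ r f /\ phi f != 0
    & forall f, ~ @HX R _ _ r f -> phi f = 0].

Definition spec_set (R : realType) (X B : topologicalType) (r : X -> B)
  : set {ptws (X -> Cplx R) -> Cplx R} := [set phi | @is_character R X B r phi].

(* The relative Stone-Cech compactification beta_B X = spectrum of H_X with the
   weak-* topology (pointwise convergence on H_X), realized as a subspace of the
   pointwise-convergence topology on functionals. *)
Definition betaB (R : realType) (X B : topologicalType) (r : X -> B) : topologicalType :=
  set_type (@spec_set R X B r).

Definition evalH (R : realType) (X B : topologicalType) (r : X -> B) (x : X)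
  : (X -> Cplx R) -> Cplx R :=
  fun h => if pselect (@HX R _ _ r h) is left _ then h x else 0.

Definition proper_map (S T : topologicalType) (g : S -> T) : Prop :=
  forall K : set T, compact K -> compact (g @^-1` K).

Definition homeomorphism (S T : topologicalType) (g : S -> T) : Prop :=
  continuous g /\ exists h : T -> S, [/\ cancel g h, cancel h g & continuous h].

Arguments evalH R {X B} r x _.
Arguments betaB R {X B} r.

From HB Require Import structures.
From mathcomp Require Import all_boot all_order all_algebra.
From mathcomp Require Import all_classical all_reals all_analysis.
From mathcomp Require Import complex.
From mathcomp Require Import ring lra.
Set Implicit Arguments. Unset Strict Implicit. Unset Printing Implicit Defensive.
Import Order.TTheory GRing.Theory Num.Theory.
Local Open Scope classical_set_scope.
Local Open Scope ring_scope.
Import numFieldNormedType.Exports.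

(* Composition with the homeomorphism f and with its inverse g identifies
   H_{X_2} with H_{X_1}.  Pulling back along f preserves H because f_0 is
   proper.  Pulling back along g does too: an element h of H_{X_1} is small
   outside r_1^{-1}(K) for some compact K, and h o g is then uniformly close
   to the generator (h o g) (v o r_2), where v in C_0(B_2) is a bump equal to
   1 on f_0(K).  Transporting characters along these mutually inverse
   isomorphisms gives a homeomorphism F of the spectra with F o i_1 = i_2 o f.
   Every character is approximately an evaluation, so i_1(X_1) is dense; as
   the spectrum of H_{X_2} is Hausdorff, the continuous map ft, which also
   satisfies ft o i_1 = i_2 o f, equals F. *)

Lemma ler_mem_sum (R : numDomainType) (T : eqType) (s : seq T) (F : T -> R) (a : T) :
  (forall t, 0 <= F t) -> a \in s -> F a <= \sum_(t <- s) F t.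
Proof.
move=> F0; elim: s => // b s IH; rewrite in_cons big_cons => /predU1P[->|/IH aS].
  by rewrite lerDl sumr_ge0.
by apply: le_trans aS _; rewrite lerDr.
Qed.

Lemma set_val_inj (T : Type) (A : set T) : injective (@set_val T A).
Proof. by rewrite set_valE; exact: val_inj. Qed.

Lemma cvg_initial (S : choiceType) (T : topologicalType) (f : S -> T)
    (F : set_system S) (s : S) :
  Filter F -> f @ F --> f s -> F --> (s : initial_topology f).
Proof.
move=> FF ff A [_ [[B Bop <-] Bfs sBfA]].
have fB : (f @ F) B by apply: ff; apply: open_nbhs_nbhs.
exact: filterS sBfA fB.
Qed.

Lemma continuous_inj_hausdorff (S T : topologicalType) (f : S -> T) :
  continuous f -> injective f -> hausdorff_space T -> hausdorff_space S.
Proof.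
rewrite !open_hausdorff => cf injf hT x y xy.
have /hT [[P Q] /= [Px Qy] [oP oQ /eqP PQ0]] : f x != f y.
  by apply: contra_neq xy; exact: injf.
exists (f @^-1` P, f @^-1` Q); first by rewrite !inE in Px Qy *.
split; [exact: (continuousP _).1 cf _ oP | exact: (continuousP _).1 cf _ oQ |].
by rewrite -preimage_setI PQ0 preimage_set0.
Qed.

Lemma continuous_closure_eq (S T : topologicalType) (f g : S -> T) (A : set S) :
  hausdorff_space T -> continuous f -> continuous g ->
  (forall x, A x -> f x = g x) -> forall x, closure A x -> f x = g x.
Proof.
move=> hT cf cg fg x; rewrite closureEcvg => -[G PG [Gx AG]].
have fGx : f @ G --> f x := cvg_trans (cvg_app f Gx) (cf x).
have gGx : f @ G --> g x.
  apply: cvg_trans (cvg_trans (cvg_app g Gx) (cg x)).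
  by apply: near_eq_cvg; apply: AG => y /fg.
exact: (cvg_unique hT fGx gGx).
Qed.

Section BoundedContinuous.
Variable R : realType.
Local Notation C := (Cplx R).

Lemma conjC_continuous : continuous (fun z : C => z^*).
Proof.
move=> z; apply: (proj2 (@cvgrPdist_lt _ _ _ (nbhs z) _ _ _)) => e e0.
have := proj1 (@cvgrPdist_lt _ _ _ (nbhs z) _ _ _) (@cvg_id _ (nbhs z)) e e0.
move=> /(_ (nbhs_filter z)) H.
by apply: filterS H => y; rewrite -rmorphB norm_conjC.
Qed.

Lemma mul_divD1_le (e M : C) : 0 < e -> 0 <= M -> e / (M + 1) * M <= e.
Proof.
move=> e0 M0; have M1 : 0 < M + 1 by rewrite ltr_wpDl.
rewrite mulrAC ler_pdivrMr // ler_wpM2l ?lerDl ?ler01 //; exact: ltW.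
Qed.

Variable X : topologicalType.

Lemma Cb_cst (a : C) : Cb (fun _ : X => a).
Proof. by split; [exact: cst_continuous | exists `|a|]. Qed.

Lemma Cb_bounded (u : X -> C) : Cb u -> exists2 M, 0 <= M & forall x, `|u x| <= M.
Proof.
move=> [_ [M hM]]; exists `|M|; first exact: normr_ge0.
move=> x; apply: le_trans (hM x) _; apply: real_ler_norm.
exact: ger0_real (le_trans (normr_ge0 _) (hM x)).
Qed.

Lemma Cb_add (u w : X -> C) : Cb u -> Cb w -> Cb (fun x => u x + w x).
Proof.
move=> [cu [M1 hM1]] [cw [M2 hM2]]; split.
  by move=> x; apply: continuousD; [exact: cu | exact: cw].
by exists (M1 + M2) => x; apply: le_trans (ler_normD _ _) _; exact: lerD.
Qed.

Lemma Cb_mul (u w : X -> C) : Cb u -> Cb w -> Cb (fun x => u x * w x).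
Proof.
move=> [cu [M1 hM1]] [cw [M2 hM2]]; split.
  by move=> x; apply: continuousM; [exact: cu | exact: cw].
by exists (M1 * M2) => x; rewrite normrM; apply: ler_pM.
Qed.

Lemma Cb_conj (u : X -> C) : Cb u -> Cb (fun x => (u x)^*).
Proof.
move=> [cu [M hM]]; split.
  by move=> x; apply: continuous_comp; [exact: cu | exact: conjC_continuous].
by exists M => x; rewrite norm_conjC.
Qed.

Lemma Cb_comp (Y : topologicalType) (u : X -> C) (g : Y -> X) :
  Cb u -> continuous g -> Cb (fun y => u (g y)).
Proof.
move=> [cu [M hM]] cg; split; last by exists M.
by move=> y; apply: continuous_comp; [exact: cg | exact: cu].
Qed.

Lemma Cb_invB (h : X -> C) (mu d : C) : Cb h -> 0 < d ->
  (forall x, d <= `|mu - h x|) -> Cb (fun x => (mu - h x)^-1).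
Proof.
move=> [ch _] d0 hd; split.
  move=> x; apply: (@continuousV C X (fun x => mu - h x) x).
    by rewrite -normr_gt0; apply: lt_le_trans (hd x).
  by apply: continuousB; [exact: cst_continuous | exact: ch].
exists d^-1 => x; rewrite normfV lef_pV2 ?posrE //.
exact: lt_le_trans (hd x).
Qed.

End BoundedContinuous.

Section RelativeAlgebra.
Variable R : realType.
Local Notation C := (Cplx R).
Variables (X B : topologicalType) (r : X -> B).

Lemma Hgen0 : Hgen r (fun _ => 0 : C).
Proof.
exists 0%N, (fun _ _ => 0), (fun _ _ => 0); split; first by case.
by apply: funext => x; rewrite big_ord0.
Qed.

Lemma Hgen_add (g1 g2 : X -> C) : Hgen r g1 -> Hgen r g2 ->
  Hgen r (fun x => g1 x + g2 x).
Proof.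
move=> [n1 [u1 [v1 [h1 ->]]]] [n2 [u2 [v2 [h2 ->]]]].
exists (n1 + n2)%N.
exists (fun k => match fintype.split k with inl i => u1 i | inr j => u2 j end).
exists (fun k => match fintype.split k with inl i => v1 i | inr j => v2 j end).
split; first by move=> k; case: (fintype.split k).
apply: funext => x; rewrite big_split_ord /=.
congr (_ + _); apply: eq_bigr => i _.
  by have -> : fintype.split (lshift n2 i) = inl i := unsplitK (inl i).
by have -> : fintype.split (rshift n1 i) = inr i := unsplitK (inr i).
Qed.

Lemma Hgen_mulCb (g w : X -> C) : Hgen r g -> Cb w -> Hgen r (fun x => g x * w x).
Proof.
move=> [n [u [v [h ->]]]] cw.
exists n, (fun k x => u k x * w x), v; split.
  by move=> k; have [? ?] := h k; split => //; exact: Cb_mul.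
by apply: funext => x; rewrite mulr_suml; apply: eq_bigr => i _; rewrite mulrAC.
Qed.

Lemma Hgen_conj (g : X -> C) : Hgen r g -> Hgen r (fun x => (g x)^*).
Proof.
move=> [n [u [v [h ->]]]].
exists n, (fun k x => (u k x)^*), (fun k b => (v k b)^*); split.
  move=> k; have [cu [cv cv0]] := h k; split; first exact: Cb_conj.
  split.
    by move=> b; apply: continuous_comp; [exact: cv | exact: conjC_continuous].
  by move=> e /cv0 [K [cK hK]]; exists K; split => // b /hK; rewrite norm_conjC.
by apply: funext => x; rewrite rmorph_sum; apply: eq_bigr => i _; rewrite rmorphM.
Qed.

Lemma HX_Cb (h : X -> C) : HX r h -> Cb h.
Proof. by case. Qed.

Lemma HX0 : HX r (fun _ => 0 : C).
Proof.
split; first exact: Cb_cst.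
move=> e e0; exists (fun _ => 0); split; first exact: Hgen0.
by move=> x; rewrite subrr normr0 ltW.
Qed.

Lemma HX_add (f g : X -> C) : HX r f -> HX r g -> HX r (fun x => f x + g x).
Proof.
move=> [cf af] [cg ag]; split; first exact: Cb_add.
move=> e e0; have e20 : 0 < e / 2 by rewrite divr_gt0.
have [f' [hf' ef']] := af _ e20; have [g' [hg' eg']] := ag _ e20.
exists (fun x => f' x + g' x); split; first exact: Hgen_add.
move=> x; rewrite opprD addrACA.
by apply: le_trans (ler_normD _ _) _; rewrite [e]splitr; exact: lerD.
Qed.

Lemma HX_mulCb (h w : X -> C) : HX r h -> Cb w -> HX r (fun x => h x * w x).
Proof.
move=> [ch ah] cw; split; first exact: Cb_mul.
have [M M0 hM] := Cb_bounded cw; move=> e e0.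
have [g [hg eg]] := ah _ (divr_gt0 e0 (ltr_wpDl M0 ltr01)).
exists (fun x => g x * w x); split; first exact: Hgen_mulCb.
move=> x; rewrite -mulrBl normrM; apply: le_trans (mul_divD1_le e0 M0).
exact: ler_pM.
Qed.

Lemma HX_mul (f g : X -> C) : HX r f -> HX r g -> HX r (fun x => f x * g x).
Proof. by move=> hf hg; apply: HX_mulCb => //; exact: HX_Cb. Qed.

Lemma HX_scale (a : C) (f : X -> C) : HX r f -> HX r (fun x => a * f x).
Proof.
move=> hf; have := HX_mulCb hf (Cb_cst X a).
by congr (HX r _); apply: funext => x; rewrite mulrC.
Qed.

Lemma HX_lin (a : C) (f g : X -> C) : HX r f -> HX r g -> HX r (fun x => a * f x + g x).
Proof. by move=> hf hg; apply: (HX_add (HX_scale a hf) hg). Qed.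

Lemma HX_conj (h : X -> C) : HX r h -> HX r (fun x => (h x)^*).
Proof.
move=> [ch ah]; split; first exact: Cb_conj.
move=> e e0; have [g [hg eg]] := ah _ e0.
exists (fun x => (g x)^*); split; first exact: Hgen_conj.
by move=> x; rewrite -rmorphB norm_conjC.
Qed.

Lemma HX_normsq (h : X -> C) : HX r h -> HX r (fun x => `|h x| ^+ 2).
Proof.
move=> hh; have := HX_mul hh (HX_conj hh).
by congr (HX r _); apply: funext => x; rewrite normCK.
Qed.

Lemma HX_sum (T : eqType) (s : seq T) (F : T -> X -> C) :
  (forall t, t \in s -> HX r (F t)) -> HX r (fun x => \sum_(t <- s) F t x).
Proof.
elim: s => [|t s IH] hs.
  have -> : (fun x => \sum_(t <- [::]) F t x) = (fun _ => 0).
    by apply: funext => x; rewrite big_nil.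
  exact: HX0.
have -> : (fun x => \sum_(u <- t :: s) F u x) = (fun x => F t x + \sum_(u <- s) F u x).
  by apply: funext => x; rewrite big_cons.
apply: HX_add; first by apply: hs; rewrite mem_head.
by apply: IH => u us; apply: hs; rewrite in_cons us orbT.
Qed.

End RelativeAlgebra.

Section Character.
Variables (R : realType) (X B : topologicalType) (r : X -> B).
Local Notation C := (Cplx R).
Variable psi : (X -> C) -> C.
Hypothesis psi_char : is_character r psi.

Lemma characterDZ (a : C) (f g : X -> C) : HX r f -> HX r g ->
  psi (fun x => a * f x + g x) = a * psi f + psi g.
Proof. by case: psi_char => lin _ _ _; exact: lin. Qed.

Lemma characterM (f g : X -> C) : HX r f -> HX r g ->
  psi (fun x => f x * g x) = psi f * psi g.
Proof. by case: psi_char => _ mul _ _; exact: mul. Qed.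

Lemma character0 : psi (fun _ => 0) = 0.
Proof.
have := characterDZ 1 (HX0 R r) (HX0 R r).
have -> : (fun _ : X => 1 * (0 : C) + 0) = (fun _ => 0).
  by apply: funext => x; rewrite mul1r addr0.
by rewrite mul1r => /eqP; rewrite -subr_eq subrr eq_sym => /eqP.
Qed.

Lemma characterD (f g : X -> C) : HX r f -> HX r g ->
  psi (fun x => f x + g x) = psi f + psi g.
Proof.
move=> hf hg; have := characterDZ 1 hf hg; rewrite mul1r => <-.
by congr psi; apply: funext => x; rewrite mul1r.
Qed.

Lemma characterZ (a : C) (f : X -> C) : HX r f -> psi (fun x => a * f x) = a * psi f.
Proof.
move=> hf; have := characterDZ a hf (HX0 R r); rewrite character0 addr0 => <-.
by congr psi; apply: funext => x; rewrite addr0.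
Qed.

Lemma character_sum (T : eqType) (s : seq T) (F : T -> X -> C) :
  (forall t, t \in s -> HX r (F t)) ->
  psi (fun x => \sum_(t <- s) F t x) = \sum_(t <- s) psi (F t).
Proof.
elim: s => [|t s IH] hs.
  have -> : (fun x => \sum_(t <- [::]) F t x) = (fun _ => 0).
    by apply: funext => x; rewrite big_nil.
  by rewrite big_nil character0.
have hsub u : u \in s -> HX r (F u) by move=> us; apply: hs; rewrite in_cons us orbT.
have ht : HX r (F t) by apply: hs; rewrite mem_head.
rewrite big_cons -IH // -(characterD ht (HX_sum hsub)).
by congr psi; apply: funext => x; rewrite big_cons.
Qed.

(* If [h] stays at distance [d] from [psi h], then [k := h / (psi h - h)] lies
   in H_X, and applying [psi] to [psi h * k - k * h = h] gives [psi h = 0]. *)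
Lemma character_value_approx (h : X -> C) : HX r h -> psi h != 0 ->
  forall d : C, 0 < d -> exists x, `|h x - psi h| < d.
Proof.
move=> hh nz d d0; apply: contrapT => hn.
have hd x : d <= `|psi h - h x|.
  rewrite distrC real_leNgt ?ger0_real ?(ltW d0) //.
  by apply/negP => hx; apply: hn; exists x.
set mu := psi h in nz hd.
have hk := HX_mulCb hh (Cb_invB (HX_Cb hh) d0 hd).
set k := (fun x => h x * (mu - h x)^-1) in hk.
have hkh := HX_scale (-1) (HX_mul hk hh).
have E : (fun x => mu * k x + (-1) * (k x * h x)) = h.
  apply: funext => x; rewrite mulN1r mulrC -mulrBr /k -mulrA mulVf ?mulr1 //.
  by rewrite -normr_gt0; apply: lt_le_trans (hd x).
have := characterDZ mu hk hkh.
rewrite E (characterZ _ (HX_mul hk hh)) (characterM hk hh) -/mu.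
move=> /eqP; rewrite mulN1r mulrC addrN => /eqP mu0.
by move: nz; rewrite mu0 eqxx.
Qed.

Lemma character_real (h : X -> C) : HX r h -> (forall x, (h x)^* = h x) ->
  (psi h)^* = psi h.
Proof.
move=> hh hr; have [->|nz] := eqVneq (psi h) 0; first by rewrite conjC0.
have small d : 0 < d -> `|(psi h)^* - psi h| < d.
  move=> d0; have [x hx] := character_value_approx hh nz (divr_gt0 d0 (ltr0Sn _ 1)).
  have -> : (psi h)^* - psi h = (psi h - h x)^* + (h x - psi h).
    by rewrite rmorphB /= hr addrA subrK.
  apply: le_lt_trans (ler_normD _ _) _.
  by rewrite [d]splitr norm_conjC distrC; apply: ltrD.
apply/eqP; rewrite -subr_eq0; apply: contraT => nz0.
by have := small `|(psi h)^* - psi h|; rewrite normr_gt0 nz0 ltxx => /(_ isT).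
Qed.

Lemma character_real_unit :
  exists e, [/\ HX r e, (forall x, (e x)^* = e x) & psi e = 1].
Proof.
have [f [hf nz]] : exists f, HX r f /\ psi f != 0 by case: psi_char.
have normalize a : HX r a -> (forall x, (a x)^* = a x) -> psi a != 0 ->
    exists e, [/\ HX r e, (forall x, (e x)^* = e x) & psi e = 1].
  move=> ha ar na; exists (fun x => (psi a)^-1 * a x); split.
  - exact: HX_scale.
  - by move=> x; rewrite rmorphM /= fmorphV /= character_real // ar.
  - by rewrite characterZ // mulVf.
have hre : HX r (fun x => 'Re (f x)).
  have := HX_scale (2^-1) (HX_add hf (HX_conj hf)).
  by congr (HX r _); apply: funext => x; rewrite ReE mulrC.
have him : HX r (fun x => 'Im (f x)).
  have := HX_scale ('i / 2) (HX_lin (-1) hf (HX_conj hf)).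
  by congr (HX r _); apply: funext => x; rewrite ImE mulN1r addrC mulrAC.
have rre x : ('Re (f x))^* = 'Re (f x) by apply: conj_Creal; exact: Creal_Re.
have rim x : ('Im (f x))^* = 'Im (f x) by apply: conj_Creal; exact: Creal_Im.
have [re0|] := eqVneq (psi (fun x => 'Re (f x))) 0; last exact: normalize.
have [im0|] := eqVneq (psi (fun x => 'Im (f x))) 0; last exact: normalize.
have := characterDZ 'i him hre; rewrite re0 im0 mulr0 addr0.
have -> : (fun x => 'i * 'Im (f x) + 'Re (f x)) = f.
  by apply: funext => x; rewrite addrC -Crect.
by move=> f0; move: nz; rewrite f0 eqxx.
Qed.

(* [a := \sum_g |g|^2 + |e - 1|^2 - 1] lies in H_X and [psi a = -1], so
   [a + 1 >= 0] takes arbitrarily small values. *)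
Lemma character_approx_zero (e : X -> C) (s : seq (X -> C)) :
  HX r e -> (forall x, (e x)^* = e x) -> psi e = 1 ->
  (forall g, g \in s -> HX r g /\ psi g = 0) ->
  forall eta : C, 0 < eta ->
  exists x, `|e x - 1| < eta /\ forall g, g \in s -> `|g x| < eta.
Proof.
move=> he er e1 hs eta eta0.
pose S x := \sum_(g <- s) `|g x| ^+ 2.
have hS : HX r S by apply: HX_sum => g /hs[/HX_normsq].
have pS : psi S = 0.
  rewrite character_sum; last by move=> g /hs[/HX_normsq].
  apply: big1_seq => g /andP[_ /hs[hg pg]].
  have -> : (fun x => `|g x| ^+ 2) = (fun x => g x * (g x)^*).
    by apply: funext => x; rewrite normCK.
  by rewrite (characterM hg (HX_conj hg)) pg mul0r.
pose a x := S x + (-2 * e x + e x * e x).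
have ha : HX r a by apply: HX_add => //; apply: HX_lin => //; exact: HX_mul.
have pa : psi a = -1.
  rewrite characterD ?characterDZ ?characterM ?e1 ?pS //;
    [ring | exact: HX_mul | exact: HX_lin (HX_mul he he)].
have Ea x : a x - psi a = S x + `|e x - 1| ^+ 2.
  by rewrite normCK rmorphB /= er rmorph1 pa /a; ring.
have na : psi a != 0 by rewrite pa oppr_eq0 oner_eq0.
have [x hx] := character_value_approx ha na (exprn_gt0 2 eta0).
have Sx0 : 0 <= S x by apply: sumr_ge0 => g _; exact: exprn_ge0.
rewrite Ea ger0_norm ?addr_ge0 ?exprn_ge0 // in hx.
have sq_lt z : `|z| ^+ 2 <= S x + `|e x - 1| ^+ 2 -> `|z| < eta.
  move=> hz; rewrite -(ltr_pXn2r (_ : (0 < 2)%N)) ?nnegrE ?(ltW eta0) //.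
  exact: le_lt_trans hz hx.
exists x; split; first by apply: sq_lt; rewrite lerDr.
move=> g gs; apply: sq_lt; apply: ler_wpDr; first exact: exprn_ge0.
exact: (@ler_mem_sum _ _ s (fun g => `|g x| ^+ 2) g
  (fun _ => exprn_ge0 2 (normr_ge0 _)) gs).
Qed.

Lemma character_approx_eval (s : seq (X -> C)) : (forall h, h \in s -> HX r h) ->
  forall eps : C, 0 < eps -> exists x, forall h, h \in s -> `|h x - psi h| < eps.
Proof.
move=> hs eps eps0; have [e [he er e1]] := character_real_unit.
pose g h x := - psi h * e x + h x.
have hg k : k \in map g s -> HX r k /\ psi k = 0.
  move=> /mapP[h /hs hh ->]; split; first exact: HX_lin.
  by rewrite /g characterDZ // e1 mulr1 addNr.
pose P := \sum_(h <- s) `|psi h|.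
have P1 : 0 < P + 1 by rewrite ltr_wpDl // sumr_ge0.
pose eta := eps / (P + 1).
have eta0 : 0 < eta by rewrite divr_gt0.
have [x [ex1 gx]] := character_approx_zero he er e1 hg eta0.
exists x => h hin; have {}gx := gx _ (map_f g hin).
have -> : h x - psi h = g h x + psi h * (e x - 1) by rewrite /g; ring.
apply: le_lt_trans (ler_normD _ _) _; rewrite normrM.
apply: lt_le_trans (ltr_leD gx (ler_wpM2l (normr_ge0 _) (ltW ex1))) _.
rewrite -{1}(mul1r eta) -mulrDl addrC mulrC.
rewrite -[X in _ <= X](divfK (lt0r_neq0 P1)) -/eta ler_wpM2l ?(ltW eta0) // lerD2r.
exact: (@ler_mem_sum _ _ s (fun h => `|psi h|) h (fun _ => normr_ge0 _) hin).
Qed.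

End Character.

Section BetaTopology.
Variables (R : realType) (X B : topologicalType) (r : X -> B).
Local Notation C := (Cplx R).

Lemma evalH_in (x : X) (h : X -> C) : HX r h -> evalH R r x h = h x.
Proof. by rewrite /evalH; case: pselect. Qed.

Lemma evalH_out (x : X) (h : X -> C) : ~ HX r h -> evalH R r x h = 0.
Proof. by rewrite /evalH; case: pselect. Qed.

Lemma betaB_out (psi : betaB R r) (h : X -> C) : ~ HX r h -> set_val psi h = 0.
Proof. by move=> hh; have [_ _ _ /(_ h hh)] := set_valP psi. Qed.

Lemma betaB_val_continuous : continuous (set_val : betaB R r -> {ptws (X -> C) -> C}).
Proof. exact: initial_continuous. Qed.

Lemma betaB_coord_continuous (t : X -> C) :
  continuous (fun phi : betaB R r => set_val phi t).
Proof.
move=> phi.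
have h1 : (set_val : betaB R r -> {ptws (X -> C) -> C}) @ nbhs phi --> set_val phi.
  exact: betaB_val_continuous.
exact: continuous_comp h1 (@proj_continuous (X -> C) (fun _ => C) t (set_val phi)).
Qed.

Lemma cvg_betaB (F : set_system (betaB R r)) (psi : betaB R r) : Filter F ->
  (forall t, (fun phi : betaB R r => set_val phi t) @ F --> set_val psi t) -> F --> psi.
Proof.
by move=> FF h; apply: cvg_initial; apply/cvg_sup => t; apply: cvg_initial; exact: h.
Qed.

Lemma betaB_hausdorff : hausdorff_space (betaB R r).
Proof.
apply: continuous_inj_hausdorff betaB_val_continuous val_inj _.
have := @hausdorff_product (X -> C) (fun _ => C) (fun _ => @norm_hausdorff _ C).
exact.
Qed.

Lemma closure_range_evalH (i : X -> betaB R r) :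
  (forall x, set_val (i x) = evalH R r x) -> closure (range i) = setT.
Proof.
move=> hi; apply/seteqP; split => // psi _; rewrite closureEcvg.
pose D := [set se : seq (X -> C) * C | 0 < se.2 /\ forall h, h \in se.1 -> HX r h].
pose N (se : seq (X -> C) * C) :=
  [set x | forall h, h \in se.1 -> `|h x - set_val psi h| < se.2].
have NF : Filter (filter_from D N).
  apply: filter_from_filter; first by exists ([::], 1); split => //=; exact: ltr01.
  move=> [s1 e1] [s2 e2] [/= e10 hs1] [/= e20 hs2].
  have [e [e0 ee1 ee2]] : exists e : C, [/\ 0 < e, e <= e1 & e <= e2].
    by case: (real_leP (gtr0_real e10) (gtr0_real e20)) => h;
      [exists e1 | exists e2; split => //; exact: ltW].
  exists (s1 ++ s2, e).
    by split => //= h; rewrite mem_cat => /orP[/hs1|/hs2].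
  move=> x /= hx; split => h hin.
    by apply: lt_le_trans (hx h _) ee1; rewrite mem_cat hin.
  by apply: lt_le_trans (hx h _) ee2; rewrite mem_cat hin orbT.
have NP : ProperFilter (filter_from D N).
  apply: filter_from_proper => -[s e] [/= e0 hs].
  have [x hx] := character_approx_eval (set_valP psi) hs e0.
  by exists x.
set G := filter_from D N in NF NP *.
exists (i @ G); first exact: fmap_proper_filter.
split; last first.
  move=> P iP; apply: (@filterS _ G NF setT); last exact: filterT.
  by move=> x _; apply: iP; exists x.
apply: cvg_betaB => t; have [ht|ht] := pselect (HX r t).
  apply/cvgrPdist_lt => e e0; exists ([:: t], e).
    by split => //= h; rewrite inE => /eqP->.
  by move=> x /= hx; rewrite hi evalH_in // distrC; apply: hx; rewrite mem_head.
rewrite betaB_out //; apply: cvg_near_cst; apply: nearW => phi.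
exact: betaB_out.
Qed.

End BetaTopology.

Section Bump.
Variable R : realType.
Local Notation C := (Cplx R).
Local Open Scope complex_scope.

Lemma normC_real (x : R) : `|(x%:C : C)| = (`|x|)%:C.
Proof. by rewrite normc_def /= expr0n /= addr0 sqrtr_sqr. Qed.

Lemma gt0C_real (e : C) : 0 < e -> e = (complex.Re e)%:C /\ 0 < complex.Re e.
Proof.
rewrite ltcE => /andP[/eqP ei er]; split => //.
by apply/eqP; rewrite eq_complex /= ei !eqxx.
Qed.

Lemma realC_continuous : continuous (fun x : R => (x%:C : C)).
Proof.
move=> x; apply: (proj2 (@cvgrPdist_lt _ _ _ (nbhs x) _ _ _)) => e /gt0C_real[-> er].
have := proj1 (@cvgrPdist_lt _ _ _ (nbhs x) _ _ _) (@cvg_id _ (nbhs x)) _ er.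
move=> /(_ (nbhs_filter x)); apply: filterS => y hy.
by rewrite -rmorphB normC_real ltcR.
Qed.

(* Urysohn's lemma in the one-point compactification of [B], separating the
   point at infinity from [K]. *)
Lemma C0_bump (B : topologicalType) : locally_compact [set: B] -> hausdorff_space B ->
  forall K : set B, compact K ->
  exists v : B -> C, [/\ C0 v, (forall b, K b -> v b = 1) & (forall b, `|1 - v b| <= 1)].
Proof.
move=> lc hB K cK.
pose O := one_point_compactification B.
have hO : hausdorff_space O := one_point_compactification_hausdorff lc hB.
have nO : normal_space O := compact_normal hO one_point_compactification_compact.
have cA : closed [set (None : O)].
  by apply: accessible_closed_set1; exact: hausdorff_accessible.
have cK' : compact (Some @` K : set O).
  apply: continuous_compact => //; apply: continuous_subspaceT => x.
  exact: one_point_compactification_some_continuous.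
have dis : [set (None : O)] `&` (Some @` K) = set0.
  by rewrite -subset0 => y [-> [b _]].
have := (@normal_separatorP R O).1 nO _ _ cA (compact_closed hO cK') dis.
move=> /(@uniform_separatorP O R) [f [cf f01 fA fK]].
have f0 : f None = 0 by apply: fA; exists None.
exists (fun b => (f (Some b))%:C); split.
- split.
    move=> b; apply: continuous_comp; last exact: realC_continuous.
    exact: (@continuous_comp B O R Some f b
      (@one_point_compactification_some_continuous B b) (cf _)).
  move=> e /gt0C_real [eE er].
  have := proj1 (@cvgrPdist_lt _ _ _ (nbhs (None : O)) _ _ _) (cf None) _ er.
  move=> /(_ (nbhs_filter (None : O))) [W [cW clW] sub].
  exists W; split => // b nWb.
  have : `|f None - f (Some b)| < complex.Re e by apply: sub; left; exists b.
  by rewrite f0 sub0r normrN eE normC_real ltcR.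
- move=> b Kb; have -> // : f (Some b) = 1.
  by apply: fK; exists (Some b) => //; exists b.
- move=> b; have := f01 (f (Some b)) (imageT f (Some b)).
  rewrite /= in_itv /= => /andP[fb0 fb1].
  rewrite -[X in `|X - _|](rmorph1 (real_complex R)) -rmorphB normC_real lecR.
  by rewrite ger0_norm ?subr_ge0 //; lra.
Qed.

End Bump.

Section VanishAlong.
Variable R : realType.
Local Notation C := (Cplx R).
Variables (X B : topologicalType) (r : X -> B).

Definition vanish_along (g : X -> C) : Prop :=
  forall e : C, 0 < e ->
    exists K : set B, compact K /\ forall x, ~ K (r x) -> `|g x| <= e.

Lemma vanish_along_sum (I : Type) (s : seq I) (F : I -> X -> C) :
  (forall i, vanish_along (F i)) -> vanish_along (fun x => \sum_(i <- s) F i x).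
Proof.
move=> hF; elim: s => [|i s IH] e e0.
  by exists set0; split => [|x _]; [exact: compact0 | rewrite big_nil normr0 ltW].
have e20 : 0 < e / 2 by rewrite divr_gt0.
have [K1 [cK1 hK1]] := hF i _ e20; have [K2 [cK2 hK2]] := IH _ e20.
exists (K1 `|` K2); split => [|x nK]; first exact: compactU.
rewrite big_cons; apply: le_trans (ler_normD _ _) _; rewrite [e]splitr.
by apply: lerD; [apply: hK1 | apply: hK2] => K; apply: nK; [left | right].
Qed.

Lemma vanish_along_Cb_C0 (u : X -> C) (v : B -> C) :
  Cb u -> C0 v -> vanish_along (fun x => u x * v (r x)).
Proof.
move=> cu [_ hv] e e0; have [M M0 hM] := Cb_bounded cu.
have [K [cK hK]] := hv _ (divr_gt0 e0 (ltr_wpDl M0 ltr01)).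
exists K; split => // x /hK vx; apply: le_trans (mul_divD1_le e0 M0).
by rewrite normrM mulrC; apply: ler_pM => //; exact: ltW.
Qed.

Lemma HX_vanish_along (h : X -> C) : HX r h -> vanish_along h.
Proof.
move=> [_ ah] e e0; have e20 : 0 < e / 2 by rewrite divr_gt0.
have [g [[n [u [v [huv ->]]]] hg]] := ah _ e20.
have vg : vanish_along (fun x => \sum_(k < n) u k x * v k (r x)).
  by apply: vanish_along_sum => k; have [cu cv] := huv k; exact: vanish_along_Cb_C0.
have [K [cK hK]] := vg _ e20.
exists K; split => // x /hK gx.
have -> : h x = (h x - \sum_(k < n) u k x * v k (r x)) + \sum_(k < n) u k x * v k (r x).
  by rewrite subrK.
by apply: le_trans (ler_normD _ _) _; rewrite [e]splitr; exact: lerD.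
Qed.

End VanishAlong.

Section Pullback.
Variable R : realType.
Local Notation C := (Cplx R).
Variables (X1 X2 B1 B2 : topologicalType) (r1 : X1 -> B1) (r2 : X2 -> B2).
Variable f0 : B1 -> B2.
Hypothesis cf0 : continuous f0.

Lemma C0_comp_proper (v : B2 -> C) : proper_map f0 -> C0 v -> C0 (fun b => v (f0 b)).
Proof.
move=> pf0 [cv hv]; split.
  by move=> b; apply: continuous_comp; [exact: cf0 | exact: cv].
move=> e /hv [K [cK hK]]; exists (f0 @^-1` K); split; first exact: pf0.
by move=> b nb; apply: hK.
Qed.

Lemma HX_comp_proper (f : X1 -> X2) : continuous f -> proper_map f0 ->
  (forall x, r2 (f x) = f0 (r1 x)) ->
  forall k : X2 -> C, HX r2 k -> HX r1 (fun x => k (f x)).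
Proof.
move=> cf pf0 comm k [ck ak]; split; first exact: Cb_comp.
move=> e /ak [g [[n [u [v [huv ->]]]] eg]].
exists (fun x => \sum_(i < n) u i (f x) * v i (r2 (f x))).
split; last by move=> x; exact: eg.
exists n, (fun i x => u i (f x)), (fun i b => v i (f0 b)); split.
  by move=> i; have [? ?] := huv i; split; [exact: Cb_comp | exact: C0_comp_proper].
by apply: funext => x; apply: eq_bigr => i _; rewrite comm.
Qed.

Lemma HX_comp_lch (g : X2 -> X1) : locally_compact [set: B2] -> hausdorff_space B2 ->
  continuous g -> (forall y, r2 y = f0 (r1 (g y))) ->
  forall h : X1 -> C, HX r1 h -> HX r2 (fun y => h (g y)).
Proof.
move=> lcB hB cg comm h hh; have chg := Cb_comp (HX_Cb hh) cg.
split => // e e0; have [K [cK hK]] := HX_vanish_along hh e0.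
have cfK : compact (f0 @` K).
  by apply: continuous_compact => //; apply: continuous_subspaceT => b; exact: cf0.
have [v [v0 v1 v01]] := C0_bump R lcB hB cfK.
exists (fun y => h (g y) * v (r2 y)); split.
  exists 1%N, (fun _ y => h (g y)), (fun _ => v); split => //.
  by apply: funext => y; rewrite big_ord1.
move=> y; rewrite -{1}(mulr1 (h (g y))) -mulrBr normrM.
have [Ky|nKy] := pselect (K (r1 (g y))).
  by rewrite v1 ?subrr ?normr0 ?mulr0 ?ltW // comm; exists (r1 (g y)).
by apply: le_trans (ler_wpM2l (normr_ge0 _) (v01 _)) _; rewrite mulr1; exact: hK.
Qed.

End Pullback.

Section BetaFun.
Variable R : realType.
Local Notation C := (Cplx R).
Variables (X1 X2 B2 : topologicalType) (r2 : X2 -> B2) (f : X1 -> X2).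

Definition betaB_fun (phi : (X1 -> C) -> C) : (X2 -> C) -> C :=
  fun k => if pselect (HX r2 k) is left _ then phi (fun x => k (f x)) else 0.

Lemma betaB_fun_in (phi : (X1 -> C) -> C) (k : X2 -> C) :
  HX r2 k -> betaB_fun phi k = phi (fun x => k (f x)).
Proof. by rewrite /betaB_fun; case: pselect. Qed.

Lemma betaB_fun_out (phi : (X1 -> C) -> C) (k : X2 -> C) :
  ~ HX r2 k -> betaB_fun phi k = 0.
Proof. by rewrite /betaB_fun; case: pselect. Qed.

End BetaFun.

Section BetaMap.
Variable R : realType.
Local Notation C := (Cplx R).
Variables (X1 X2 B1 B2 : topologicalType) (r1 : X1 -> B1) (r2 : X2 -> B2).
Variables (f : X1 -> X2) (g : X2 -> X1).
Hypotheses (HXf : forall k : X2 -> C, HX r2 k -> HX r1 (fun x => k (f x)))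
  (HXg : forall h : X1 -> C, HX r1 h -> HX r2 (fun y => h (g y)))
  (fK : cancel f g).

Lemma betaB_fun_character (phi : (X1 -> C) -> C) :
  is_character r1 phi -> is_character r2 (betaB_fun r2 f phi).
Proof.
case=> lin mul [h0 [hh0 nz]] _; split.
- move=> a k1 k2 hk1 hk2; rewrite !betaB_fun_in //; last exact: HX_lin.
  exact: lin (HXf hk1) (HXf hk2).
- move=> k1 k2 hk1 hk2; rewrite !betaB_fun_in //; last exact: HX_mul.
  exact: mul (HXf hk1) (HXf hk2).
- exists (fun y => h0 (g y)); split; first exact: HXg.
  rewrite betaB_fun_in; last exact: HXg.
  by have -> : (fun x => h0 (g (f x))) = h0 by apply: funext => x; rewrite fK.
- by move=> k hk; rewrite betaB_fun_out.
Qed.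

Definition betaB_map (psi : betaB R r1) : betaB R r2 :=
  exist _ (betaB_fun r2 f (set_val psi) : {ptws (X2 -> C) -> C})
    (mem_set (betaB_fun_character (set_valP psi))).

Lemma betaB_map_val (psi : betaB R r1) :
  set_val (betaB_map psi) = betaB_fun r2 f (set_val psi).
Proof. by []. Qed.

Lemma betaB_map_continuous : continuous betaB_map.
Proof.
move=> psi; have FF : Filter (betaB_map @ nbhs psi) by exact: fmap_filter.
apply: cvg_betaB => t; have [ht|ht] := pselect (HX r2 t).
  rewrite betaB_map_val betaB_fun_in //.
  have HF : (fun phi => set_val phi t) @ (betaB_map @ nbhs psi) `=>`
      (fun phi => set_val phi (fun x => t (f x))) @ nbhs psi.
    move=> P hP; apply: (@filterS _ (nbhs psi) _ _ _ _ hP) => phi /=.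
    by rewrite betaB_map_val betaB_fun_in.
  exact: cvg_trans HF (@betaB_coord_continuous R _ _ r1 (fun x => t (f x)) psi).
rewrite betaB_map_val betaB_fun_out //; apply: cvg_near_cst; apply: nearW => phi.
exact: betaB_out.
Qed.

Lemma betaB_fun_evalH (x : X1) : betaB_fun r2 f (evalH R r1 x) = evalH R r2 (f x).
Proof.
apply: funext => k; have [hk|hk] := pselect (HX r2 k).
  by rewrite betaB_fun_in // !evalH_in //; exact: HXf.
by rewrite betaB_fun_out // evalH_out.
Qed.

Lemma betaB_funK (phi : betaB R r1) :
  betaB_fun r1 g (betaB_fun r2 f (set_val phi)) = set_val phi.
Proof.
apply: funext => h; have [hh|hh] := pselect (HX r1 h); last first.
  by rewrite betaB_fun_out // betaB_out.
rewrite !betaB_fun_in //; last exact: HXg.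
by congr (set_val phi); apply: funext => x; rewrite fK.
Qed.

End BetaMap.

Lemma betaB_mapK (R : realType) (X1 X2 B1 B2 : topologicalType)
    (r1 : X1 -> B1) (r2 : X2 -> B2) (f : X1 -> X2) (g : X2 -> X1)
    (HXf : forall k : X2 -> Cplx R, HX r2 k -> HX r1 (fun x => k (f x)))
    (HXg : forall h : X1 -> Cplx R, HX r1 h -> HX r2 (fun y => h (g y)))
    (fK : cancel f g) (gK : cancel g f) :
  cancel (betaB_map HXf HXg fK) (betaB_map HXg HXf gK).
Proof. by move=> psi; apply: set_val_inj; exact: betaB_funK. Qed.

Theorem lemma4p15 (R : realType) (X1 X2 B1 B2 : topologicalType)
  (f : X1 -> X2) (r1 : X1 -> B1) (r2 : X2 -> B2) (f0 : B1 -> B2)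
  (cf : continuous f) (cr1 : continuous r1) (cr2 : continuous r2)
  (cf0 : continuous f0) (comm : r2 \o f = f0 \o r1)
  (lcB1 : locally_compact [set: B1]) (hB1 : hausdorff_space B1)
  (lcB2 : locally_compact [set: B2]) (hB2 : hausdorff_space B2)
  (pf0 : proper_map f0)
  (i1 : X1 -> betaB R r1) (hi1 : forall x, set_val (i1 x) = evalH R r1 x)
  (i2 : X2 -> betaB R r2) (hi2 : forall x, set_val (i2 x) = evalH R r2 x)
  (br1 : betaB R r1 -> B1) (cbr1 : continuous br1) (hbr1 : br1 \o i1 = r1)
  (br2 : betaB R r2 -> B2) (cbr2 : continuous br2) (hbr2 : br2 \o i2 = r2)
  (ft : betaB R r1 -> betaB R r2) (cft : continuous ft)
  (hft1 : ft \o i1 = i2 \o f) (hft2 : br2 \o ft = f0 \o br1) :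
  homeomorphism f -> homeomorphism ft.
Proof.
move=> [_ [g [fK gK cg]]].
have commf x : r2 (f x) = f0 (r1 x) := congr1 (fun h => h x) comm.
have commg y : r2 y = f0 (r1 (g y)) by rewrite -commf gK.
have HXf := HX_comp_proper (R := R) cf0 cf pf0 commf.
have HXg := HX_comp_lch (R := R) cf0 lcB2 hB2 cg commg.
pose F := betaB_map HXf HXg fK; pose G := betaB_map HXg HXf gK.
have cF : continuous F by exact: betaB_map_continuous.
have ftF : ft =1 F.
  move=> psi; apply: (continuous_closure_eq (A := range i1)
    (@betaB_hausdorff R _ _ r2) cft cF).
    move=> _ [x _ <-]; have -> : ft (i1 x) = i2 (f x) := congr1 (fun h => h x) hft1.
    by apply: set_val_inj; rewrite hi2 betaB_map_val hi1 betaB_fun_evalH.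
  by rewrite closure_range_evalH.
split => //; exists G; split; last exact: betaB_map_continuous.
- by move=> psi; rewrite ftF; exact: betaB_mapK.
- by move=> phi; rewrite ftF; exact: betaB_mapK.
Qed.
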